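(* Let $(X_1,X_2)$ be a nonnegative random vector and let $\overline F_T$ be a DFR survival function on $[0,\infty)$. Assume there exists an $N_1$-distributional version $\{Z_2^{x_1}:x_1\in N_1\}$ of $X_2$ given $X_1$ such that $Z_2^{x_1}\le_{ST}X_1$ for all $x_1\in N_1$. Then $$\big(E[\overline F_T(X_1)]\big)^2\le E[\overline F_T(X_1+X_2)]\,\overline F_T(0).$$
   Context: A survival function $\overline G$ is DFR if for every $z\ge0$ the map $t\mapsto\overline G(z+t)/\overline G(t)$ is increasing (on $\{t:\overline G(t)>0\}$). For random variables $X,Y$, $X\le_{ST}Y$ means $P(X>t)\le P(Y>t)$ for all real $t$. Let $F_1$ be the law of $X_1$ and $N_1\subseteq\mathbb R_+$ a Borel set with $P(X_1\in N_1)=1$. A family $\{\mu^{x}:x\in N_1\}$ of probability measures on $\mathbb R_+$ with $x\mapsto\mu^{x}(B)$ measurable for every Borel $B$ is an $N_1$ regular conditional distribution of $X_2$ given $X_1$ if $P(X_1\in A,X_2\in B)=\int_A\mu^{x}(B)\,dF_1(x)$ for all Borel $A\subseteq N_1$, $B\subseteq\mathbb R_+$; an $N_1$-distributional version of $X_2$ given $X_1$ is a family of random variables $\{Z_2^{x}:x\in N_1\}$ with $Z_2^{x}$ having law $\mu^{x}$ for such a regular conditional distribution. *)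

From HB Require Import structures.
From mathcomp Require Import all_boot all_order all_algebra.
From mathcomp Require Import all_classical all_reals all_analysis measurable_realfun.
Set Implicit Arguments. Unset Strict Implicit. Unset Printing Implicit Defensive.
Import Order.TTheory GRing.Theory Num.Theory.
Local Open Scope classical_set_scope.
Local Open Scope ring_scope.

Definition survival_on_Rplus (R : realType) (G : R -> R) : Prop :=
  exists mu : probability R R,
    mu `[0, +oo[%classic = 1%E /\ forall t : R, (G t)%:E = mu `]t, +oo[%classic.

Definition DFR (R : realType) (G : R -> R) : Prop :=
  forall z t s : R, 0 <= z -> 0 <= t -> t <= s -> 0 < G t -> 0 < G s ->
    G (z + t) / G t <= G (z + s) / G s.

(* mu ~ {mu^x : x in N1} is an N1 regular conditional distribution of X2
   given X1 (the family is indexed by all of R but only used on N1). *)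
Definition regular_cond_distr d (T : measurableType d) (R : realType)
    (P : probability T R) (X1 X2 : {RV P >-> R}) (N1 : set R)
    (mu : R -> probability R R) : Prop :=
  measurable N1 /\ P (X1 @^-1` N1) = 1%E /\
  (forall x, N1 x -> mu x `[0, +oo[%classic = 1%E) /\
  (forall B : set R, measurable B -> measurable_fun N1 (fun x => mu x B)) /\
  (forall A B : set R, measurable A -> A `<=` N1 ->
     measurable B -> B `<=` `[0, +oo[%classic ->
     P (X1 @^-1` A `&` X2 @^-1` B) =
     (\int[distribution P X1]_(x in A) mu x B)%E).

From HB Require Import structures.
From mathcomp Require Import all_boot all_order all_algebra.
From mathcomp Require Import all_classical all_reals all_analysis measurable_realfun.
Import Order.TTheory GRing.Theory Num.Theory.
Local Open Scope classical_set_scope.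
Local Open Scope ring_scope.

Set Implicit Arguments.
Unset Strict Implicit.

(* Write G t = nu ]t, +oo[.  By Tonelli, E[G(X1)] = \int P(X1 < u) dnu(u) and
   E[G(X1) G(X2)] = \int\int P(X1 < s, X2 < u) dnu(s) dnu(u).  Integrating the
   conditional law of X2 over {X1 < s}, the bound Z2^x <=_ST X1 gives
   P(X1 < s, X2 < u) >= P(X1 < s) P(X1 < u), so the double integral dominates
   E[G(X1)]^2.  Finally DFR gives G x * G y <= G (x + y) * G 0 for x, y >= 0. *)

Section survival_function.
Context (R : realType) (nu : measure R R) (G : R -> R).
Hypothesis GE : forall t, (G t)%:E = nu `]t, +oo[%classic.

Lemma survival_ge0 t : 0 <= G t.
Proof. by rewrite -lee_fin GE measure_ge0. Qed.

Lemma survival_nonincreasing : {homo G : x y / x <= y >-> y <= x}.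
Proof.
move=> x y xy; rewrite -lee_fin !GE; apply: le_measure; rewrite ?inE //.
by move=> z /=; rewrite !in_itv /= !andbT; apply: le_lt_trans.
Qed.

Lemma measurable_survival : measurable_fun setT G.
Proof. by apply: nonincreasing_measurable => //; exact: survival_nonincreasing. Qed.

End survival_function.

Lemma DFR_mul_le (R : realType) (G : R -> R) (x y : R) :
  (forall t, 0 <= G t) -> {homo G : a b / a <= b >-> b <= a} -> DFR G ->
  0 <= x -> 0 <= y -> G x * G y <= G (x + y) * G 0.
Proof.
move=> G0 Gni GDFR x0 y0.
have [Gy0|Gy_neq0] := eqVneq (G y) 0; first by rewrite Gy0 mulr0 mulr_ge0.
have [G00|G0_neq0] := eqVneq (G 0) 0.
  have Gx0 : G x = 0 by apply/eqP; rewrite eq_le G0 andbT -G00 Gni.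
  by rewrite Gx0 mul0r mulr_ge0.
have Gy_gt0 : 0 < G y by rewrite lt0r Gy_neq0 G0.
have G0_gt0 : 0 < G 0 by rewrite lt0r G0_neq0 G0.
have := GDFR x 0 y x0 (lexx _) y0 G0_gt0 Gy_gt0.
by rewrite addr0 ler_pdivrMr// mulrAC ler_pdivlMr.
Qed.

Definition stochastic_le {R : realType} (nu nu' : set R -> \bar R) : Prop :=
  forall t : R, (nu `]t, +oo[%classic <= nu' `]t, +oo[%classic)%E.

Section stochastic_order.
Context (R : realType).
Local Open Scope ereal_scope.

Lemma stochastic_le_closed (nu : measure R R)
    (nu' : {finite_measure set R -> \bar R}) (u : R) :
  stochastic_le nu nu' -> nu `[u, +oo[%classic <= nu' `[u, +oo[%classic.
Proof.
move=> nu_le.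
pose F n := `](u - n.+1%:R^-1)%R, +oo[%classic : set R.
have cvgF : (nu' \o F) @ \oo --> nu' `[u, +oo[%classic.
  rewrite itvcyEbigcap; apply: nonincreasing_cvg_mu.
  - by rewrite ltey_eq fin_num_measure//; exact: measurable_itv.
  - by move=> n; exact: measurable_itv.
  - by apply: bigcapT_measurable => n; exact: measurable_itv.
  - move=> m n mn; apply/subsetPset => z; rewrite /F /= !in_itv/= !andbT.
    by apply: le_lt_trans; rewrite lerD2l lerN2 lef_pV2 ?posrE// ler_nat ltnS.
rewrite -(cvg_lim (@ereal_hausdorff R) cvgF).
apply: lime_ge; first by apply/cvg_ex; eexists; exact: cvgF.
apply: nearW => n /=; apply: le_trans (nu_le _); apply: le_measure; rewrite ?inE //.
by move=> z /=; rewrite !in_itv/= !andbT => uz; rewrite ltrBlDr (le_lt_trans uz)// ltrDl.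
Qed.

Lemma stochastic_le_lt (nu nu' : probability R R) (u : R) :
  nu `[0%R, +oo[%classic = 1 -> stochastic_le nu nu' ->
  nu' `]-oo, u[%classic <= nu `[0%R, u[%classic.
Proof.
move=> nu_Rplus nu_le.
have split_Rplus : 1 <= nu `[0%R, u[%classic + nu `[u, +oo[%classic.
  rewrite -nu_Rplus; apply: le_trans (measureU2 _ _ _); rewrite ?inE //.
  apply: le_measure; rewrite ?inE //; first exact: measurableU.
  move=> x /=; rewrite !in_itv /= !andbT => x0.
  by case: (ltrP x u) => xu; [left|right]; rewrite /= ?in_itv/= ?x0.
have -> : `]-oo, u[%classic = ~` `[u, +oo[%classic.
  by apply/seteqP; split => x /=; rewrite !in_itv /= andbT leNgt; case: (x < u)%R.
rewrite (probability_setC nu') // leeBlDr ?fin_num_measure//.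
by apply: le_trans split_Rplus _; rewrite leeD2l //; exact: stochastic_le_closed.
Qed.
End stochastic_order.

Section joint_lower_bound.
Context d (T : measurableType d) (R : realType) (P : probability T R).
Local Open Scope ereal_scope.

Lemma probability_setI_full (C E : set T) :
  measurable C -> measurable E -> P E = 1 -> P (C `&` E) = P C.
Proof.
move=> mC mE PE1; rewrite [RHS](measureDI P mC mE) -[LHS]add0e; congr (_ + _).
apply/esym/eqP; rewrite -measure_le0.
have : P (C `\` E) <= P (~` E).
  apply: le_measure; rewrite ?inE; [exact: measurableD|exact: measurableC|by move=> ? []].
by rewrite probability_setC // PE1 subee.
Qed.

Context (X1 X2 : {RV P >-> R}).

Lemma regular_cond_distr_lt_mul_le (N1 : set R) (mu : R -> probability R R) (s u : R) :
  (forall w, (0 <= X2 w)%R) -> regular_cond_distr X1 X2 N1 mu ->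
  (forall x, N1 x -> stochastic_le (mu x) (distribution P X1)) ->
  P (X1 @^-1` `]-oo, s[) * P (X1 @^-1` `]-oo, u[) <=
  P (X1 @^-1` `]-oo, s[ `&` X2 @^-1` `]-oo, u[).
Proof.
move=> X2_ge0 [mN1 [PN1 [mu_Rplus [mmu mu_joint]]]] mu_le.
have mX (X : {RV P >-> R}) (B : set R) : measurable B -> measurable (X @^-1` B).
  exact: measurable_funPTI.
pose A := N1 `&` `]-oo, s[%classic.
have mA : measurable A by exact: measurableI.
have restrict_N1 (C : set T) : measurable C -> P (C `&` X1 @^-1` N1) = P C.
  by move=> mC; apply: probability_setI_full => //; exact: mX.
(* X2 >= 0 turns {X2 < u} into {X2 \in [0, u[}, where the conditional law applies. *)
have -> : P (X1 @^-1` `]-oo, s[ `&` X2 @^-1` `]-oo, u[) =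
          P (X1 @^-1` A `&` X2 @^-1` `[0%R, u[).
  rewrite -restrict_N1; last by apply: measurableI; exact: mX.
  by congr (P _); apply/seteqP; split => w /=; rewrite !in_itv /= X2_ge0 => -[[]].
rewrite mu_joint //; last 2 first.
- by move=> x [].
- by move=> x /=; rewrite !in_itv /= => /andP[-> _].
have -> : P (X1 @^-1` `]-oo, s[) = distribution P X1 A.
  rewrite -restrict_N1; last exact: mX.
  by congr (P _); apply/seteqP; split => w /= [].
rewrite muleC -integral_cst //.
apply: ge0_le_integral => //; first by apply: measurable_funS (mmu _ _) => // x [].
by move=> x [N1x _]; exact: stochastic_le_lt (mu_Rplus _ N1x) (mu_le _ N1x).
Qed.

End joint_lower_bound.

Lemma sqr_integral_le_iterated d (T : measurableType d) (R : realType)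
    (nu : measure T R) (g : T -> \bar R) (F : T -> T -> \bar R) :
  (forall u, (0 <= g u)%E) -> measurable_fun setT g ->
  (forall u, measurable_fun setT (F u)) ->
  measurable_fun setT (fun u => \int[nu]_s F u s)%E ->
  (forall u s, g s * g u <= F u s)%E ->
  ((\int[nu]_u g u) ^+ 2 <= \int[nu]_u \int[nu]_s F u s)%E.
Proof.
move=> g_ge0 mg mF mintF gg_le.
have intg_ge0 : (0 <= \int[nu]_u g u)%E by exact: integral_ge0.
rewrite expe2 -ge0_integralZr //; apply: ge0_le_integral => //.
- by move=> u _; exact: mule_ge0.
- exact: emeasurable_funM.
move=> u _; rewrite -ge0_integralZl //; apply: ge0_le_integral => //.
- by move=> s _; exact: mule_ge0.
- exact: emeasurable_funM.
by move=> s _; rewrite muleC; exact: gg_le.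
Qed.

Definition ltgraph {T} {R : realType} (Y : T -> R) : set (T * R) :=
  [set p | (Y p.1 < p.2)%R].

Section tail_fubini.
Context d (T : measurableType d) (R : realType).
Context (m : {sigma_finite_measure set T -> \bar R}).
Context (nu : {sigma_finite_measure set R -> \bar R}).
Local Open Scope ereal_scope.

Lemma measurable_ltgraph (Y : T -> R) :
  measurable_fun setT Y -> measurable (ltgraph Y).
Proof.
move=> mY.
have mYsub : measurable_fun setT (fun p : T * R => p.2 - Y p.1)%R.
  by apply: measurable_funB => //; exact: measurableT_comp.
have := mYsub measurableT _ (measurable_itv `]0%R, +oo[); rewrite setTI.
by congr measurable; apply/seteqP; split => p /=; rewrite in_itv/= andbT subr_gt0.
Qed.

Lemma indic_ltgraph_l (Y : T -> R) w u :
  \1_(ltgraph Y) (w, u) = \1_(`]Y w, +oo[%classic) u :> R.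
Proof.
by rewrite !indicE; congr (_ : bool)%:R; apply/idP/idP; rewrite !inE /= in_itv/= andbT.
Qed.

Lemma indic_ltgraph_r (Y : T -> R) w u :
  \1_(ltgraph Y) (w, u) = \1_(Y @^-1` `]-oo, u[%classic) w :> R.
Proof.
by rewrite !indicE; congr (_ : bool)%:R; apply/idP/idP; rewrite !inE /= in_itv/=.
Qed.

Section weighted.
Context (k : T -> \bar R) (Y : T -> R).
Hypotheses (mk : measurable_fun setT k) (k_ge0 : forall w, 0 <= k w).
Hypothesis mY : measurable_fun setT Y.

Let f (p : T * R) := k p.1 * (\1_(ltgraph Y) p)%:E.

Let mf : measurable_fun setT f.
Proof.
apply: emeasurable_funM; first exact: measurableT_comp mk measurable_fst.
by apply/measurable_EFinP; apply: measurable_indic; exact: measurable_ltgraph.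
Qed.

Let f_ge0 p : 0 <= f p.
Proof. by rewrite mule_ge0 // lee_fin. Qed.

Lemma integral_tail_fubini :
  \int[m]_w (k w * nu `]Y w, +oo[%classic) =
  \int[nu]_u \int[m]_w (k w * (\1_(Y @^-1` `]-oo, u[%classic) w)%:E).
Proof.
transitivity (\int[nu]_u \int[m]_w f (w, u)); last first.
  by apply: eq_integral => u _; apply: eq_integral => w _; rewrite /f /= indic_ltgraph_r.
rewrite -(fubini_tonelli f mf f_ge0) /=; apply: eq_integral => w _.
under eq_integral do rewrite /f /= indic_ltgraph_l.
rewrite ge0_integralZl // ?integral_indic ?setIT //.
exact/measurable_EFinP/measurable_indic.
Qed.

Lemma measurable_integral_tail_fubini :
  measurable_fun setT
    (fun u : R => \int[m]_w (k w * (\1_(Y @^-1` `]-oo, u[%classic) w)%:E)).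
Proof.
apply: (eq_measurable_fun (fubini_G m f)); last exact: measurable_fun_fubini_tonelli_G.
by move=> u _; apply: eq_integral => w _; rewrite /f /= indic_ltgraph_r.
Qed.

End weighted.
End tail_fubini.

Section survival_integrals.
Context d (T : measurableType d) (R : realType).
Context (m : {sigma_finite_measure set T -> \bar R}).
Context (nu : {sigma_finite_measure set R -> \bar R}) (G : R -> R).
Hypothesis GE : forall t, (G t)%:E = nu `]t, +oo[%classic.
Local Open Scope ereal_scope.

Let measurable_lt (Y : T -> R) u :
  measurable_fun setT Y -> measurable (Y @^-1` `]-oo, u[%classic).
Proof. by move=> mY; rewrite -[_ @^-1` _]setTI; exact: mY. Qed.

Let integral_indic_lt (Y : T -> R) (A : set T) u :
  measurable_fun setT Y -> measurable A ->
  \int[m]_w ((\1_A w)%:E * (\1_(Y @^-1` `]-oo, u[%classic) w)%:E) =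
  m (Y @^-1` `]-oo, u[%classic `&` A).
Proof.
move=> mY mA; rewrite -(setIT (_ `&` A)) -integral_indic //; last first.
  by apply: measurableI => //; exact: measurable_lt.
by apply: eq_integral => w _; rewrite indicI /= EFinM muleC.
Qed.

Lemma measurable_prob_lt (Y : T -> R) :
  measurable_fun setT Y ->
  measurable_fun setT (fun u : R => m (Y @^-1` `]-oo, u[%classic)).
Proof.
move=> mY; apply: (eq_measurable_fun (fun u : R =>
  \int[m]_w (1 * (\1_(Y @^-1` `]-oo, u[%classic) w)%:E))).
  move=> u _; under eq_integral do rewrite mul1e.
  by rewrite integral_indic ?setIT //; exact: measurable_lt.
by apply: measurable_integral_tail_fubini => //; exact: measurable_cst.
Qed.

Lemma integral_survival (Y : T -> R) : measurable_fun setT Y ->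
  \int[m]_w (G (Y w))%:E = \int[nu]_u m (Y @^-1` `]-oo, u[%classic).
Proof.
move=> mY; under eq_integral do rewrite GE -[nu _]mul1e.
rewrite (integral_tail_fubini m nu (k := fun=> 1)) //.
apply: eq_integral => u _; under eq_integral do rewrite mul1e.
by rewrite integral_indic ?setIT //; exact: measurable_lt.
Qed.

Let mG : measurable_fun setT G.
Proof. exact: measurable_survival GE. Qed.

Lemma integral_survival_indic_lt (X Y : T -> R) u :
  measurable_fun setT X -> measurable_fun setT Y ->
  \int[m]_w ((G (X w))%:E * (\1_(Y @^-1` `]-oo, u[%classic) w)%:E) =
  \int[nu]_s m (X @^-1` `]-oo, s[%classic `&` Y @^-1` `]-oo, u[%classic).
Proof.
move=> mX mY; under eq_integral do rewrite muleC GE.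
rewrite integral_tail_fubini //.
  by apply: eq_integral => s _; rewrite integral_indic_lt //; exact: measurable_lt.
by apply/measurable_EFinP; apply: measurable_indic; exact: measurable_lt.
Qed.

Lemma integral_survival_mul (X Y : T -> R) :
  measurable_fun setT X -> measurable_fun setT Y ->
  \int[m]_w ((G (X w))%:E * (G (Y w))%:E) =
  \int[nu]_u \int[nu]_s m (X @^-1` `]-oo, s[%classic `&` Y @^-1` `]-oo, u[%classic).
Proof.
move=> mX mY; under eq_integral do rewrite [(G (Y _))%:E]GE.
rewrite integral_tail_fubini //.
- by apply: eq_integral => u _; exact: integral_survival_indic_lt.
- by apply/measurable_EFinP; exact: measurableT_comp.
- by move=> w; rewrite lee_fin (survival_ge0 GE).
Qed.

Lemma measurable_prob_lt_lt (X Y : T -> R) u :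
  measurable_fun setT X -> measurable_fun setT Y ->
  measurable_fun setT
    (fun s : R => m (X @^-1` `]-oo, s[%classic `&` Y @^-1` `]-oo, u[%classic)).
Proof.
move=> mX mY; apply: (eq_measurable_fun (fun s : R =>
  \int[m]_w ((\1_(Y @^-1` `]-oo, u[%classic) w)%:E *
            (\1_(X @^-1` `]-oo, s[%classic) w)%:E))).
  by move=> s _; rewrite integral_indic_lt //; exact: measurable_lt.
apply: measurable_integral_tail_fubini => //.
by apply/measurable_EFinP; apply: measurable_indic; exact: measurable_lt.
Qed.

Lemma measurable_integral_prob_lt_lt (X Y : T -> R) :
  measurable_fun setT X -> measurable_fun setT Y ->
  measurable_fun setT (fun u : R =>
    \int[nu]_s m (X @^-1` `]-oo, s[%classic `&` Y @^-1` `]-oo, u[%classic)).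
Proof.
move=> mX mY; apply: (eq_measurable_fun (fun u : R =>
  \int[m]_w ((G (X w))%:E * (\1_(Y @^-1` `]-oo, u[%classic) w)%:E))).
  by move=> u _; exact: integral_survival_indic_lt.
apply: measurable_integral_tail_fubini => //.
- by apply/measurable_EFinP; exact: measurableT_comp.
- by move=> w; rewrite lee_fin (survival_ge0 GE).
Qed.

Lemma integral_survival_mul_le (X Y : T -> R) : DFR G ->
  measurable_fun setT X -> measurable_fun setT Y ->
  (forall w, (0 <= X w)%R) -> (forall w, (0 <= Y w)%R) ->
  \int[m]_w ((G (X w))%:E * (G (Y w))%:E) <= \int[m]_w (G (X w + Y w))%:E * (G 0)%:E.
Proof.
move=> GDFR mX mY X_ge0 Y_ge0; have G_ge0 := survival_ge0 GE.
have mGsum : measurable_fun setT (fun w => (G (X w + Y w))%:E).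
  by apply/measurable_EFinP; apply: measurableT_comp => //; exact: measurable_funD.
rewrite -ge0_integralZr ?lee_fin //; last by move=> w _; rewrite lee_fin.
apply: ge0_le_integral => //.
- by move=> w _; rewrite -EFinM lee_fin mulr_ge0.
- by apply: emeasurable_funM; apply/measurable_EFinP; exact: measurableT_comp.
- exact: emeasurable_funM.
move=> w _; rewrite -!EFinM lee_fin DFR_mul_le //.
exact: survival_nonincreasing GE.
Qed.

End survival_integrals.

Unset Implicit Arguments.

Theorem proposition3p2 (d : measure_display) (T : measurableType d)
    (R : realType) (P : probability T R) (X1 X2 : {RV P >-> R})
    (G : R -> R) :
  (forall w, 0 <= X1 w) -> (forall w, 0 <= X2 w) ->
  survival_on_Rplus G -> DFR G ->
  (exists (N1 : set R) (mu : R -> probability R R),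
     regular_cond_distr X1 X2 N1 mu /\
     forall x, N1 x -> forall t : R,
       (mu x `]t, +oo[%classic <= P (X1 @^-1` `]t, +oo[%classic))%E) ->
  ((\int[P]_w (G (X1 w))%:E) ^+ 2 <=
     (\int[P]_w (G (X1 w + X2 w))%:E) * (G 0)%:E)%E.
Proof.
move=> X1_ge0 X2_ge0 [nu [_ GE]] GDFR [N1 [mu [mu_cond mu_le]]].
have mX1 : measurable_fun setT X1 by [].
have mX2 : measurable_fun setT X2 by [].
apply: le_trans (integral_survival_mul_le P GE GDFR mX1 mX2 X1_ge0 X2_ge0).
rewrite (integral_survival P GE mX1) (integral_survival_mul P GE mX1 mX2).
apply: sqr_integral_le_iterated.
- by move=> u; exact: measure_ge0.
- exact: measurable_prob_lt.
- by move=> u; exact: measurable_prob_lt_lt.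
- exact: measurable_integral_prob_lt_lt.
- by move=> u s; exact: regular_cond_distr_lt_mul_le X2_ge0 mu_cond mu_le.
Qed.
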